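(* Let $([v_{ij}:v_{ji}])$ be common lines data for planes $P_1,\dots,P_N$, and let $i,j,k,m$ be distinct indices such that the triples $(i,j,k)$ and $(i,j,m)$ strictly satisfy the spherical triangle inequalities. Choose unit-norm representatives of all the pairs involved and set $$L_{ijk,ijm}=\big(v_{ki}\cdot v_{kj}-(v_{ij}\cdot v_{ik})(v_{ji}\cdot v_{jk})\big)\,\big|\det[v_{ij},v_{im}]\det[v_{ji},v_{jm}]\big|-\sigma\big(v_{mi}\cdot v_{mj}-(v_{ij}\cdot v_{im})(v_{ji}\cdot v_{jm})\big)\,\big|\det[v_{ij},v_{ik}]\det[v_{ji},v_{jk}]\big|,$$ where $\sigma=\operatorname{sign}\big(\det[v_{ij},v_{ik}]\det[v_{ij},v_{im}]\det[v_{ji},v_{jk}]\det[v_{ji},v_{jm}]\big)$. Suppose $L_{ijk,ijm}=0$. Then for any frames $F_i,F_j,F_k$ realizing the triple $(i,j,k)$ and any frames $G_i,G_j,G_m$ realizing the triple $(i,j,m)$, there exists a unique $A\in\mathrm O(3)$ with $AF_i=G_i$ and $AF_j=G_j$.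
   Context: A frame is an ordered pair $(a,b)$ of orthonormal vectors in $\mathbb R^3$. Planes $P_1=\dots=P_N=\mathbb R^2$; a frame $F_i=(a_i,b_i)$ gives the embedding $\iota_i:P_i\to\mathbb R^3$, $\iota_i(x,y)=xa_i+yb_i$. $\mathrm O(3)$ is the group of all $3\times3$ orthogonal matrices, acting on frames by $A(a,b)=(Aa,Ab)$. Common lines data is a collection $([v_{ij}:v_{ji}])_{1\le i<j\le N}$ of elements of $\mathbb P(P_i\times P_j)$ (nonzero pairs $(v_{ij},v_{ji})\in\mathbb R^2\times\mathbb R^2$ up to nonzero scaling) with $\|v_{ij}\|^2=\|v_{ji}\|^2$; indices of a pair may be written in either order. Frames $F_i,F_j,F_k$ realize the triple $(i,j,k)$ if $\iota_i(v_{ij})=\iota_j(v_{ji})$, $\iota_i(v_{ik})=\iota_k(v_{ki})$, $\iota_j(v_{jk})=\iota_k(v_{kj})$. For a triple and representatives, $\alpha_{ijk}=\cos^{-1}\frac{v_{ij}\cdot v_{ik}}{\|v_{ij}\|\|v_{ik}\|}$, $\beta_{ijk}=\cos^{-1}\frac{v_{ji}\cdot v_{jk}}{\|v_{ji}\|\|v_{jk}\|}$, $\gamma_{ijk}=\cos^{-1}\frac{v_{ki}\cdot v_{kj}}{\|v_{ki}\|\|v_{kj}\|}$; the triple strictly satisfies the spherical triangle inequalities if for any representatives $\beta+\gamma>\alpha$, $\alpha+\gamma>\beta$, $\alpha+\beta>\gamma$, $\alpha+\beta+\gamma<2\pi$. $\det[u,w]$ denotes the determinant of the $2\times2$ matrix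 with columns $u,w$. *)

From HB Require Import structures.
From mathcomp Require Import all_boot all_order all_algebra.
From mathcomp Require Import all_classical all_reals all_analysis.
Set Implicit Arguments. Unset Strict Implicit. Unset Printing Implicit Defensive.
Import Order.TTheory GRing.Theory Num.Theory.
Local Open Scope ring_scope.

Section Defs.
Variable R : realType.

Definition dot2 (u w : R * R) : R := u.1 * w.1 + u.2 * w.2.
Definition norm2 (u : R * R) : R := Num.sqrt (dot2 u u).
Definition det2 (u w : R * R) : R := u.1 * w.2 - w.1 * u.2.
Definition scale2 (c : R) (u : R * R) : R * R := (c * u.1, c * u.2).
Definition normalize2 (u : R * R) : R * R := scale2 (norm2 u)^-1 u.

Definition dot3 (a b : 'cV[R]_3) : R := \sum_(l < 3) a l 0 * b l 0.
Definition is_frame (F : 'cV[R]_3 * 'cV[R]_3) : Prop :=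
  dot3 F.1 F.1 = 1 /\ dot3 F.2 F.2 = 1 /\ dot3 F.1 F.2 = 0.
Definition iota (F : 'cV[R]_3 * 'cV[R]_3) (x : R * R) : 'cV[R]_3 :=
  x.1 *: F.1 + x.2 *: F.2.
Definition is_O3 (A : 'M[R]_3) : Prop := A^T *m A = 1%:M.
Definition act (A : 'M[R]_3) (F : 'cV[R]_3 * 'cV[R]_3) : 'cV[R]_3 * 'cV[R]_3 :=
  (A *m F.1, A *m F.2).

(* Common lines data for planes indexed by 'I_N, given through representatives:
   v i j = v_ij, and the element for the pair {i,j} is [v i j : v j i]. *)
Definition common_lines_data (N : nat) (v : 'I_N -> 'I_N -> R * R) : Prop :=
  forall i j : 'I_N, i != j ->
    ((v i j, v j i) != ((0, 0), (0, 0))) /\ dot2 (v i j) (v i j) = dot2 (v j i) (v j i).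

Definition realizes (N : nat) (v : 'I_N -> 'I_N -> R * R) (i j k : 'I_N)
  (Fi Fj Fk : 'cV[R]_3 * 'cV[R]_3) : Prop :=
  iota Fi (v i j) = iota Fj (v j i) /\
  iota Fi (v i k) = iota Fk (v k i) /\
  iota Fj (v j k) = iota Fk (v k j).

Definition angle2 (u w : R * R) : R := acos (dot2 u w / (norm2 u * norm2 w)).

(* strict spherical triangle inequalities, for ANY representatives
   (c1, c2, c3 rescale the pairs {i,j}, {i,k}, {j,k}) *)
Definition strict_sti (N : nat) (v : 'I_N -> 'I_N -> R * R) (i j k : 'I_N) : Prop :=
  forall c1 c2 c3 : R, c1 != 0 -> c2 != 0 -> c3 != 0 ->
    let vij := scale2 c1 (v i j) in let vji := scale2 c1 (v j i) in
    let vik := scale2 c2 (v i k) in let vki := scale2 c2 (v k i) in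
    let vjk := scale2 c3 (v j k) in let vkj := scale2 c3 (v k j) in
    let a := angle2 vij vik in
    let b := angle2 vji vjk in
    let g := angle2 vki vkj in
    [/\ b + g > a, a + g > b, a + b > g & a + b + g < 2 * pi].

Definition L_ijk_ijm (N : nat) (v : 'I_N -> 'I_N -> R * R) (i j k m : 'I_N) : R :=
  let u := fun p q => normalize2 (v p q) in
  let sigma := Num.sg (det2 (u i j) (u i k) * det2 (u i j) (u i m)
                       * det2 (u j i) (u j k) * det2 (u j i) (u j m)) in
  (dot2 (u k i) (u k j) - dot2 (u i j) (u i k) * dot2 (u j i) (u j k))
    * `|det2 (u i j) (u i m) * det2 (u j i) (u j m)|
  - sigma * (dot2 (u m i) (u m j) - dot2 (u i j) (u i m) * dot2 (u j i) (u j m))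
    * `|det2 (u i j) (u i k) * det2 (u j i) (u j k)|.

End Defs.

(* Identify each plane P_i with its image under the frame.  With unit
   representatives, the common line of P_i and P_j is the vector
   c = iota F_i v_ij = iota F_j v_ji; let p and q be the unit vectors of P_i
   and P_j orthogonal to c.  Decomposing v_ik and v_jk along c and p (resp. q),
   the spherical law of cosines reads
     v_ki . v_kj = (v_ij . v_ik) (v_ji . v_jk) + det[v_ij,v_ik] det[v_ji,v_jk] (p . q),
   and the strict triangle inequalities say that the two determinants are
   nonzero and that |p . q| < 1.  Hence p . q is determined by the data, and
   L_{ijk,ijm} = 0 says exactly that the frames F and G give the same p . q.
   Two triples (c, p, q) with the same Gram matrix, c orthogonal to p and q
   and |p . q| < 1, span R^3 and are related by a unique orthogonal map;
   mapping (c, p) and (c, q) is the same as mapping F_i and F_j. *)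

From Pilot Require Import Defs.
From HB Require Import structures.
From mathcomp Require Import all_boot all_order all_algebra.
From mathcomp Require Import all_classical all_reals all_analysis.
From mathcomp Require Import ring lra.
Import Order.TTheory GRing.Theory Num.Theory.
Set Implicit Arguments.
Unset Strict Implicit.
Local Open Scope ring_scope.

Local Notation iota := Defs.iota.

Section SphericalTriangle.
Variable R : realType.

Lemma spherical_triangle_cos_bounds (a b g : R) :
  0 <= a <= pi -> 0 <= b <= pi -> 0 <= g <= pi ->
  b + g > a -> a + g > b -> a + b > g -> a + b + g < 2 * pi ->
  [/\ 0 < sin a, 0 < sin b, cos (a + b) < cos g & cos g < cos (a - b)].
Proof.
move=> /andP[a0 api] /andP[b0 bpi] /andP[g0 gpi] h1 h2 h3 h4.
have pi0 := @pi_gt0 R.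
split.
- by apply: sin_gt0_pi; apply/andP; split; lra.
- by apply: sin_gt0_pi; apply/andP; split; lra.
- have [abpi|abpi] := lerP (a + b) pi.
    have I1 : a + b \in `[0, pi] by rewrite in_itv /=; apply/andP; split; lra.
    by rewrite ltr_cos ?in_itv /= ?g0 ?gpi.
  have -> : cos (a + b) = cos (pi *+ 2 - (a + b)).
    by rewrite cosB cos2pi sin2pi mul0r addr0 mul1r.
  have I1 : pi *+ 2 - (a + b) \in `[0, pi].
    by rewrite in_itv /= mulr2n; apply/andP; split; lra.
  by rewrite ltr_cos ?in_itv /= ?g0 ?gpi // mulr2n; lra.
- have [ba|ba] := lerP b a.
    have I1 : a - b \in `[0, pi] by rewrite in_itv /=; apply/andP; split; lra.
    by rewrite ltr_cos ?in_itv /= ?g0 ?gpi //; lra.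
  rewrite -(cosN (a - b)) opprB.
  have I1 : b - a \in `[0, pi] by rewrite in_itv /=; apply/andP; split; lra.
  by rewrite ltr_cos ?in_itv /= ?g0 ?gpi //; lra.
Qed.

Lemma cos_sin_unit_bounds (C S : R) : C ^+ 2 + S ^+ 2 = 1 -> -1 <= C <= 1.
Proof. by move=> e; rewrite expr2 in e; apply/andP; split; nra. Qed.

Lemma sin_acos_unit (C S : R) : C ^+ 2 + S ^+ 2 = 1 -> sin (acos C) = `|S|.
Proof.
move=> e; rewrite sin_acos; last exact: cos_sin_unit_bounds e.
by rewrite (_ : 1 - C ^+ 2 = S ^+ 2) ?sqrtr_sqr // -e addrAC subrr add0r.
Qed.

Lemma spherical_triangle_acos_bound (Ca Sa Cb Sb Cg Sg : R) :
  Ca ^+ 2 + Sa ^+ 2 = 1 -> Cb ^+ 2 + Sb ^+ 2 = 1 -> Cg ^+ 2 + Sg ^+ 2 = 1 ->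
  acos Cb + acos Cg > acos Ca -> acos Ca + acos Cg > acos Cb ->
  acos Ca + acos Cb > acos Cg -> acos Ca + acos Cb + acos Cg < 2 * pi ->
  [/\ Sa != 0, Sb != 0 & `|Cg - Ca * Cb| < `|Sa * Sb|].
Proof.
move=> ha hb hg h1 h2 h3 h4.
have cK (C S : R) : C ^+ 2 + S ^+ 2 = 1 -> cos (acos C) = C.
  by move=> e; apply: acosK; rewrite in_itv /= (cos_sin_unit_bounds e).
have range (C S : R) : C ^+ 2 + S ^+ 2 = 1 -> 0 <= acos C <= pi.
  by move=> e; rewrite acos_ge0 ?acos_lepi ?(cos_sin_unit_bounds e).
have [sa0 sb0 c1 c2] :=
  spherical_triangle_cos_bounds (range _ _ ha) (range _ _ hb) (range _ _ hg)
                                h1 h2 h3 h4.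
rewrite cosD cosB (cK _ _ ha) (cK _ _ hb) (cK _ _ hg) in c1 c2.
rewrite (sin_acos_unit ha) (sin_acos_unit hb) in c1 c2.
rewrite (sin_acos_unit ha) normr_gt0 in sa0.
rewrite (sin_acos_unit hb) normr_gt0 in sb0.
by split => //; rewrite normrM ltr_norml; apply/andP; split; lra.
Qed.

End SphericalTriangle.

Section Euclidean.
Variable R : realType.
Implicit Types (a b c d : 'cV[R]_3) (x y z : R * R) (F G : 'cV[R]_3 * 'cV[R]_3).

Lemma dot3C a b : dot3 a b = dot3 b a.
Proof. by apply: eq_bigr => l _; rewrite mulrC. Qed.

Lemma dot3Dl a b c : dot3 (a + b) c = dot3 a c + dot3 b c.
Proof. by rewrite /dot3 -big_split; apply: eq_bigr => l _; rewrite !mxE mulrDl. Qed.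

Lemma dot3Zl (r : R) a c : dot3 (r *: a) c = r * dot3 a c.
Proof. by rewrite /dot3 mulr_sumr; apply: eq_bigr => l _; rewrite !mxE mulrA. Qed.

Lemma dot3Nl a c : dot3 (- a) c = - dot3 a c.
Proof. by rewrite -scaleN1r dot3Zl mulN1r. Qed.

Lemma dot3Dr a b c : dot3 c (a + b) = dot3 c a + dot3 c b.
Proof. by rewrite dot3C dot3Dl !(dot3C c). Qed.

Lemma dot3Zr (r : R) a c : dot3 c (r *: a) = r * dot3 c a.
Proof. by rewrite dot3C dot3Zl dot3C. Qed.

Lemma dot3Nr a c : dot3 c (- a) = - dot3 c a.
Proof. by rewrite dot3C dot3Nl dot3C. Qed.

Definition dot3E := (dot3Dl, dot3Dr, dot3Nl, dot3Nr, dot3Zl, dot3Zr).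

Definition orthonormal3 a b c : Prop :=
  [/\ dot3 a a = 1, dot3 b b = 1 & dot3 c c = 1] /\
  [/\ dot3 a b = 0, dot3 a c = 0 & dot3 b c = 0].

Definition col3 a b c : 'M[R]_3 := \matrix_(r, l) (nth 0 [:: a; b; c] l) r 0.

Lemma mulmx_col3 (X : 'M[R]_3) a b c :
  X *m col3 a b c = col3 (X *m a) (X *m b) (X *m c).
Proof.
apply/matrixP => r [[|[|[|l]]] Hl] //; rewrite !mxE;
  by apply: eq_bigr => s _; rewrite mxE.
Qed.

Lemma col3_inj a b c a' b' c' :
  col3 a b c = col3 a' b' c' -> [/\ a = a', b = b' & c = c'].
Proof.
move=> e.
have col (l : 'I_3) : nth 0 [:: a; b; c] l = nth 0 [:: a'; b'; c'] l :> 'cV_3.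
  by case: l => [[|[|[|l]]] Hl] //=; apply/matrixP => r z;
     rewrite (ord1 z); move/matrixP/(_ r (Ordinal Hl)): e; rewrite !mxE.
by split; [exact: (col 0) | exact: (col 1) | exact: (col 2%:R)].
Qed.

Lemma col3_orthogonal a b c :
  orthonormal3 a b c -> (col3 a b c)^T *m col3 a b c = 1%:M.
Proof.
case=> [[aa bb cc] [ab ac bc]]; apply/matrixP => r l.
have -> : ((col3 a b c)^T *m col3 a b c) r l =
    dot3 (nth 0 [:: a; b; c] r) (nth 0 [:: a; b; c] l).
  by rewrite !mxE; apply: eq_bigr => s _; rewrite !mxE.
by rewrite mxE; case: r => [[|[|[|r]]] Hr] //; case: l => [[|[|[|l]]] Hl] //=;
  rewrite dot3C.
Qed.

Lemma orthonormal_map_exists_unique a b c a' b' c' :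
  orthonormal3 a b c -> orthonormal3 a' b' c' ->
  exists A : 'M[R]_3,
    [/\ A^T *m A = 1%:M, A *m a = a', A *m b = b' & A *m c = c'] /\
    forall B : 'M[R]_3, B *m a = a' -> B *m b = b' -> B *m c = c' -> B = A.
Proof.
move=> /col3_orthogonal MM /col3_orthogonal NN.
set M := col3 a b c in MM; set N := col3 a' b' c' in NN.
have MM' : M *m M^T = 1%:M by apply: mulmx1C.
have [Aa Ab Ac] : [/\ N *m M^T *m a = a', N *m M^T *m b = b' & N *m M^T *m c = c'].
  by apply: col3_inj; rewrite -mulmx_col3 -mulmxA MM mulmx1.
exists (N *m M^T); split.
  split => //.
  by rewrite trmx_mul trmxK mulmxA -(mulmxA M) NN mulmx1 MM'.
move=> B Ba Bb Bc.
have BM : B *m M = N by rewrite mulmx_col3 Ba Bb Bc.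
by rewrite -[B]mulmx1 -MM' mulmxA BM.
Qed.

(* Gram-Schmidt: d is completed to the orthonormal triple (a, b, n) with
   d = t b + s n and s = sqrt (1 - t^2). *)
Lemma orthogonal_map_of_gram a b d a' b' d' (t : R) :
  dot3 a a = 1 -> dot3 b b = 1 -> dot3 d d = 1 ->
  dot3 a b = 0 -> dot3 a d = 0 -> dot3 b d = t ->
  dot3 a' a' = 1 -> dot3 b' b' = 1 -> dot3 d' d' = 1 ->
  dot3 a' b' = 0 -> dot3 a' d' = 0 -> dot3 b' d' = t -> t ^+ 2 < 1 ->
  exists A : 'M[R]_3,
    [/\ A^T *m A = 1%:M, A *m a = a', A *m b = b' & A *m d = d'] /\
    forall B : 'M[R]_3, B *m a = a' -> B *m b = b' -> B *m d = d' -> B = A.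
Proof.
move=> aa bb dd ab ad bd aa' bb' dd' ab' ad' bd' t2.
pose s := Num.sqrt (1 - t ^+ 2).
have s0 : s != 0 by rewrite gt_eqF // sqrtr_gt0 subr_gt0.
have s2 : s ^+ 2 = 1 - t ^+ 2 by rewrite sqr_sqrtr // subr_ge0 ltW.
pose n (e2 e3 : 'cV[R]_3) := s^-1 *: (e3 - t *: e2).
have decomp e2 e3 : e3 = t *: e2 + s *: n e2 e3.
  by rewrite /n scalerA mulfV // scale1r addrC subrK.
have ortho e1 e2 e3 : dot3 e1 e1 = 1 -> dot3 e2 e2 = 1 -> dot3 e3 e3 = 1 ->
    dot3 e1 e2 = 0 -> dot3 e1 e3 = 0 -> dot3 e2 e3 = t -> orthonormal3 e1 e2 (n e2 e3).
  move=> h11 h22 h33 h12 h13 h23; do 2!split => //.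
  - rewrite !dot3E h22 h33 (dot3C e3) h23.
    rewrite (_ : _ * _ = (1 - t ^+ 2) / s ^+ 2); first by rewrite -s2 divff ?expf_neq0.
    by rewrite expr2 invfM; ring.
  - by rewrite !dot3E h12 h13; ring.
  - by rewrite !dot3E h22 h23; ring.
have [A [[AO Aa Ab An] A_uniq]] :=
  orthonormal_map_exists_unique (ortho _ _ _ aa bb dd ab ad bd)
                                (ortho _ _ _ aa' bb' dd' ab' ad' bd').
exists A; split.
  by split => //; rewrite (decomp b d) (decomp b' d') mulmxDr -2!scalemxAr Ab An.
move=> B Ba Bb Bd; apply: A_uniq => //.
by rewrite /n -scalemxAr mulmxBr -scalemxAr Bd Bb.
Qed.

Lemma dot2_ge0 x : 0 <= dot2 x x.
Proof. by rewrite /dot2 -!expr2 addr_ge0 ?sqr_ge0. Qed.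

Definition perp x : R * R := (- x.2, x.1).

Lemma dot2_perp x : dot2 (perp x) (perp x) = dot2 x x.
Proof. by rewrite /dot2 /=; ring. Qed.

Lemma dot2_perp0 x : dot2 x (perp x) = 0.
Proof. by rewrite /dot2 /=; ring. Qed.

Lemma iota_dot F x y : is_frame F -> dot3 (iota F x) (iota F y) = dot2 x y.
Proof.
by case=> h1 [h2 h3]; rewrite /iota /dot2 !dot3E h1 h2 (dot3C F.2) h3; ring.
Qed.

Lemma iotaZ F r x : iota F (scale2 r x) = r *: iota F x.
Proof. by rewrite /iota /= scalerDr !scalerA. Qed.

Lemma iota_decomp F x y : dot2 x x = 1 ->
  iota F y = dot2 x y *: iota F x + det2 x y *: iota F (perp x).
Proof.
rewrite /dot2 /det2 /iota /= => hx.
rewrite !scalerDr !scalerA addrACA -!scalerDl.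
by congr (_ *: _ + _ *: _); rewrite -[LHS]mulr1 -hx; ring.
Qed.

Lemma act_iota (A : 'M[R]_3) F G z : act A F = G -> A *m iota F z = iota G z.
Proof. by move=> <-; rewrite /iota mulmxDr -!scalemxAr. Qed.

Lemma act_of_iota (A : 'M[R]_3) F G x : dot2 x x = 1 ->
  A *m iota F x = iota G x -> A *m iota F (perp x) = iota G (perp x) ->
  act A F = G.
Proof.
move=> hx h1 h2.
have Az z : A *m iota F z = iota G z.
  by rewrite (iota_decomp F z hx) (iota_decomp G z hx) mulmxDr -!scalemxAr h1 h2.
have iota10 (H : 'cV[R]_3 * 'cV[R]_3) : iota H (1, 0) = H.1.
  by rewrite /iota /= scale1r scale0r addr0.
have iota01 (H : 'cV[R]_3 * 'cV[R]_3) : iota H (0, 1) = H.2.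
  by rewrite /iota /= scale1r scale0r add0r.
by rewrite /act -(iota10 F) -(iota01 F) !Az iota10 iota01 -surjective_pairing.
Qed.

(* When iota F x = iota G y is a common unit vector, this is the cosine of
   the dihedral angle between the two planes along that line. *)
Definition dihedral_cos F G x y : R := dot3 (iota F (perp x)) (iota G (perp y)).

Lemma spherical_law_of_cosines Fi Fj Fk x y xk yk zi zj :
  is_frame Fi -> is_frame Fj -> is_frame Fk -> dot2 x x = 1 -> dot2 y y = 1 ->
  iota Fi x = iota Fj y -> iota Fi xk = iota Fk zi -> iota Fj yk = iota Fk zj ->
  dot2 zi zj = dot2 x xk * dot2 y yk +
               det2 x xk * det2 y yk * dihedral_cos Fi Fj x y.
Proof.
move=> fi fj fk hx hy e1 e2 e3.
rewrite /dihedral_cos -(iota_dot zi zj fk) -e2 -e3.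
rewrite (iota_decomp Fi xk hx) (iota_decomp Fj yk hy).
have cc : dot3 (iota Fi x) (iota Fj y) = 1 by rewrite -e1 iota_dot.
have cq : dot3 (iota Fi x) (iota Fj (perp y)) = 0 by rewrite e1 iota_dot ?dot2_perp0.
have pc : dot3 (iota Fi (perp x)) (iota Fj y) = 0.
  by rewrite -e1 iota_dot // /dot2 /=; ring.
move: cc cq pc.
move: (iota Fi x) (iota Fi (perp x)) (iota Fj y) (iota Fj (perp y)) => c p c' q cc cq pc.
by rewrite !dot3E cc cq pc; ring.
Qed.

Lemma frame_pair_map_exists_unique Fi Fj Gi Gj x y :
  is_frame Fi -> is_frame Fj -> is_frame Gi -> is_frame Gj ->
  dot2 x x = 1 -> dot2 y y = 1 ->
  iota Fi x = iota Fj y -> iota Gi x = iota Gj y ->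
  dihedral_cos Fi Fj x y = dihedral_cos Gi Gj x y ->
  dihedral_cos Fi Fj x y ^+ 2 < 1 ->
  exists A : 'M[R]_3,
    [/\ is_O3 A, act A Fi = Gi & act A Fj = Gj] /\
    (forall B : 'M[R]_3, [/\ is_O3 B, act B Fi = Gi & act B Fj = Gj] -> B = A).
Proof.
move=> fi fj gi gj hx hy eF eG et t2.
have iota_unit H z : is_frame H -> dot2 z z = 1 -> dot3 (iota H z) (iota H z) = 1.
  by move=> h hz; rewrite iota_dot.
have iota_perp_unit H z : is_frame H -> dot2 z z = 1 ->
    dot3 (iota H (perp z)) (iota H (perp z)) = 1.
  by move=> h hz; rewrite iota_dot ?dot2_perp.
have iota_perp_ortho H z : is_frame H -> dot3 (iota H z) (iota H (perp z)) = 0.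
  by move=> h; rewrite iota_dot ?dot2_perp0.
have cqF : dot3 (iota Fi x) (iota Fj (perp y)) = 0 by rewrite eF iota_perp_ortho.
have cqG : dot3 (iota Gi x) (iota Gj (perp y)) = 0 by rewrite eG iota_perp_ortho.
have [A [[AO Ac Ap Aq] A_uniq]] := orthogonal_map_of_gram
  (iota_unit _ _ fi hx) (iota_perp_unit _ _ fi hx) (iota_perp_unit _ _ fj hy)
  (iota_perp_ortho _ _ fi) cqF (erefl (dihedral_cos Fi Fj x y))
  (iota_unit _ _ gi hx) (iota_perp_unit _ _ gi hx) (iota_perp_unit _ _ gj hy)
  (iota_perp_ortho _ _ gi) cqG (esym et) t2.
exists A; split.
  split => //; first exact: act_of_iota hx Ac Ap.
  by apply: act_of_iota hy _ Aq; rewrite -eF -eG.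
by move=> B [_ BFi BFj]; apply: A_uniq; apply: act_iota.
Qed.

End Euclidean.

Lemma sgr_mul_normE (R : realDomainType) (a b t t' : R) :
  a * t * `|b| - Num.sg (a * b) * (b * t') * `|a| = a * `|b| * (t - t').
Proof.
rewrite sgrM (_ : _ * _ * _ * _ = (Num.sg a * `|a|) * (Num.sg b * b) * t');
  last by ring.
by rewrite -numEsg -normrEsg; ring.
Qed.

Section CommonLines.
Variables (R : realType) (N : nat) (v : 'I_N -> 'I_N -> R * R).
Hypothesis v_cl : common_lines_data v.

Local Notation nv p q := (normalize2 (v p q)).

Lemma common_line_pos (p q : 'I_N) : p != q -> 0 < dot2 (v p q) (v p q).
Proof.
move=> pq; have [nz e] := v_cl pq.
rewrite lt_neqAle dot2_ge0 andbT eq_sym; apply: contra nz => /eqP z.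
have sq0 (x : R * R) : dot2 x x = 0 -> x = (0, 0).
  case: x => a b; rewrite /dot2 /= -!expr2 => /eqP.
  by rewrite paddr_eq0 ?sqr_ge0 // !sqrf_eq0 => /andP[/eqP-> /eqP->].
by rewrite (sq0 _ z) (sq0 _ (etrans (esym e) z)).
Qed.

Lemma unit_rep_unit (p q : 'I_N) : p != q -> dot2 (nv p q) (nv p q) = 1.
Proof.
move=> /common_line_pos hp.
have n2 : norm2 (v p q) ^+ 2 = dot2 (v p q) (v p q) by rewrite sqr_sqrtr // ltW.
have n0 : norm2 (v p q) != 0 by rewrite gt_eqF // sqrtr_gt0.
rewrite (_ : dot2 _ _ = dot2 (v p q) (v p q) / norm2 (v p q) ^+ 2).
  by rewrite -n2 divff // expf_neq0.
by rewrite /normalize2 /scale2 /dot2 /= expr2 invfM; ring.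
Qed.

Lemma iota_unit_rep (p q : 'I_N) F G : p != q ->
  iota F (v p q) = iota G (v q p) -> iota F (nv p q) = iota G (nv q p).
Proof.
by move=> /v_cl[_ e] h; rewrite /normalize2 !iotaZ {2}/norm2 -e h.
Qed.

Lemma strict_sti_bound (i j k : 'I_N) :
  i != j -> i != k -> j != k -> strict_sti v i j k ->
  [/\ det2 (nv i j) (nv i k) != 0, det2 (nv j i) (nv j k) != 0 &
      `|dot2 (nv k i) (nv k j) - dot2 (nv i j) (nv i k) * dot2 (nv j i) (nv j k)|
      < `|det2 (nv i j) (nv i k) * det2 (nv j i) (nv j k)|].
Proof.
move=> ij ik jk /(_ 1 1 1 (oner_neq0 R) (oner_neq0 R) (oner_neq0 R)).
have scale1 (x : R * R) : scale2 1 x = x by case: x => a b; rewrite /scale2 /= !mul1r.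
have angleE (x y : R * R) : angle2 x y = acos (dot2 (normalize2 x) (normalize2 y)).
  by rewrite /angle2 /normalize2 /scale2 /dot2 /= invfM; congr acos; ring.
have cs p q r : p != q -> p != r ->
    dot2 (nv p q) (nv p r) ^+ 2 + det2 (nv p q) (nv p r) ^+ 2 = 1.
  move=> pq pr; rewrite (_ : _ + _ = dot2 (nv p q) (nv p q) * dot2 (nv p r) (nv p r)).
    by rewrite !unit_rep_unit ?mulr1.
  by rewrite /dot2 /det2; ring.
rewrite /= !scale1 !angleE => -[h1 h2 h3 h4].
have ki : k != i by rewrite eq_sym.
have kj : k != j by rewrite eq_sym.
have ji : j != i by rewrite eq_sym.
exact: spherical_triangle_acos_bound (cs _ _ _ ij ik) (cs _ _ _ ji jk)
                                    (cs _ _ _ ki kj) h1 h2 h3 h4.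
Qed.

Lemma realization_dihedral_cos (i j k : 'I_N) Fi Fj Fk :
  i != j -> i != k -> j != k -> strict_sti v i j k ->
  is_frame Fi -> is_frame Fj -> is_frame Fk -> realizes v i j k Fi Fj Fk ->
  let D := det2 (nv i j) (nv i k) * det2 (nv j i) (nv j k) in
  let t := dihedral_cos Fi Fj (nv i j) (nv j i) in
  [/\ D != 0, t ^+ 2 < 1 &
      dot2 (nv k i) (nv k j) - dot2 (nv i j) (nv i k) * dot2 (nv j i) (nv j k) = D * t].
Proof.
move=> ij ik jk sti fi fj fk [e1 [e2 e3]] D t.
have [d1 d2 bound] := strict_sti_bound ij ik jk sti.
have ji : j != i by rewrite eq_sym.
have law :
    dot2 (nv k i) (nv k j) = dot2 (nv i j) (nv i k) * dot2 (nv j i) (nv j k) + D * t.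
  apply: (spherical_law_of_cosines fi fj fk (unit_rep_unit ij) (unit_rep_unit ji));
  exact: iota_unit_rep.
have D0 : D != 0 by rewrite mulf_neq0.
rewrite law addrAC subrr add0r normrM gtr_pMr ?normr_gt0 // in bound.
split => //; last by rewrite law addrAC subrr add0r.
by rewrite -real_normK ?num_real // expr_lt1.
Qed.

Lemma dihedral_cos_eq_of_L_ijk_ijm (i j k m : 'I_N) Fi Fj Fk Gi Gj Gm :
  i != j -> i != k -> j != k -> i != m -> j != m ->
  strict_sti v i j k -> strict_sti v i j m ->
  is_frame Fi -> is_frame Fj -> is_frame Fk ->
  is_frame Gi -> is_frame Gj -> is_frame Gm ->
  realizes v i j k Fi Fj Fk -> realizes v i j m Gi Gj Gm ->
  L_ijk_ijm v i j k m = 0 ->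
  dihedral_cos Fi Fj (nv i j) (nv j i) = dihedral_cos Gi Gj (nv i j) (nv j i).
Proof.
move=> ij ik jk im jm stik stim fi fj fk gi gj gm rF rG.
have [DF0 _ XF] := realization_dihedral_cos ij ik jk stik fi fj fk rF.
have [DG0 _ XG] := realization_dihedral_cos ij im jm stim gi gj gm rG.
rewrite /L_ijk_ijm /= XF XG.
set DF := _ * det2 _ (nv j k) in DF0 *; set DG := _ * det2 _ (nv j m) in DG0 *.
rewrite (_ : Num.sg _ = Num.sg (DF * DG)); last by congr Num.sg; rewrite /DF /DG; ring.
move/eqP; rewrite sgr_mul_normE 2!mulf_eq0 normr_eq0 (negbTE DF0) (negbTE DG0).
by rewrite subr_eq0 => /eqP.
Qed.

End CommonLines.

Theorem lemma1 (R : realType) (N : nat) (v : 'I_N -> 'I_N -> R * R)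
  (i j k m : 'I_N) :
  common_lines_data v ->
  uniq [:: i; j; k; m] ->
  strict_sti v i j k -> strict_sti v i j m ->
  L_ijk_ijm v i j k m = 0 ->
  forall Fi Fj Fk Gi Gj Gm : 'cV[R]_3 * 'cV[R]_3,
    is_frame Fi -> is_frame Fj -> is_frame Fk ->
    is_frame Gi -> is_frame Gj -> is_frame Gm ->
    realizes v i j k Fi Fj Fk ->
    realizes v i j m Gi Gj Gm ->
    exists A : 'M[R]_3,
      [/\ is_O3 A, act A Fi = Gi & act A Fj = Gj] /\
      (forall B : 'M[R]_3, [/\ is_O3 B, act B Fi = Gi & act B Fj = Gj] -> B = A).
Proof.
move=> v_cl; rewrite /= !inE !negb_or => /and4P[/and3P[ij ik im] /andP[jk jm] _ _].
move=> stik stim L0 Fi Fj Fk Gi Gj Gm fi fj fk gi gj gm rF rG.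
have ji : j != i by rewrite eq_sym.
have [_ tF2 _] := realization_dihedral_cos v_cl ij ik jk stik fi fj fk rF.
apply: (frame_pair_map_exists_unique fi fj gi gj
          (unit_rep_unit v_cl ij) (unit_rep_unit v_cl ji)
          (iota_unit_rep v_cl ij rF.1) (iota_unit_rep v_cl ij rG.1)) tF2.
exact: (dihedral_cos_eq_of_L_ijk_ijm v_cl ij ik jk im jm stik stim
          fi fj fk gi gj gm rF rG).
Qed.
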